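(* If $t\in[1/2,1]$, then $w_1(t,a)<w_3(t,a)$ and $w(t,a)/W(t,a)\le 24/35$ for all $a\in[(3t+2)/4,2]$.
   Context: For $(t,a)\in\mathbb R^2$ define $w_1(t,a)=(2t+3)a-(3t^2/4+t)$, $w_2(t,a)=(4t+4)a-(3t^2/2+2t+2)$, $w_3(t,a)=8ta-(3t^2+4t-4)$, $W(t,a)=[(t+2)a-(t^2/2+t)](t+2)$, and $w(t,a)=\min\{w_1(t,a),w_2(t,a),w_3(t,a)\}$. *)

From Stdlib Require Import Reals.
Open Scope R_scope.

Definition w1 (t a : R) : R := (2*t+3)*a - (3*t^2/4 + t).
Definition w2 (t a : R) : R := (4*t+4)*a - (3*t^2/2 + 2*t + 2).
Definition w3 (t a : R) : R := 8*t*a - (3*t^2 + 4*t - 4).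
Definition WW (t a : R) : R := ((t+2)*a - (t^2/2 + t)) * (t+2).
Definition w (t a : R) : R := Rmin (w1 t a) (Rmin (w2 t a) (w3 t a)).

(* Write a0 for the point where w1 and w2 cross: w2 - w1 = (2t+1)(a - a0).
   For fixed t, 24 W - 35 w1 and 24 W - 35 w2 are affine in a, with slopes
   24t^2 + 26t - 9 > 0 and 24t^2 - 44t - 44 < 0 respectively, and both equal
   (t - 1/2)(36 + 12t - 15t^2 - 6t^3)/(2t+1) >= 0 at a = a0.  Hence 24 W
   dominates 35 w1 to the right of a0 and 35 w2 to its left, i.e. it always
   dominates 35 min(w1, w2) >= 35 w; the constant 24/35 is attained at t = 1/2,
   a = a0.  The lower bound on a only serves to make W positive and w1 < w3. *)
From Stdlib Require Import Reals Lra Psatz.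
Open Scope R_scope.

Definition crossing_excess (t : R) : R := 36 + 12*t - 15*t^2 - 6*t^3.

Lemma crossing_excess_pos (t : R) : 1/2 <= t <= 1 -> 0 < crossing_excess t.
Proof. intros Ht; unfold crossing_excess; nra. Qed.

Lemma WW_sub_w1_decomp (t a : R) :
  (2*t+1) * (24 * WW t a - 35 * w1 t a)
  = (24*t^2 + 26*t - 9) * (w2 t a - w1 t a) + (t - 1/2) * crossing_excess t.
Proof. unfold WW, w1, w2, crossing_excess; field. Qed.

Lemma WW_sub_w2_decomp (t a : R) :
  (2*t+1) * (24 * WW t a - 35 * w2 t a)
  = (24*t^2 - 44*t - 44) * (w2 t a - w1 t a) + (t - 1/2) * crossing_excess t.
Proof. unfold WW, w1, w2, crossing_excess; field. Qed.

Lemma w1_le_WW (t a : R) :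
  1/2 <= t <= 1 -> w1 t a <= w2 t a -> 35 * w1 t a <= 24 * WW t a.
Proof.
  intros Ht H12.
  assert (Hslope : 0 <= 24*t^2 + 26*t - 9) by nra.
  assert (Hrhs : 0 <= (24*t^2 + 26*t - 9) * (w2 t a - w1 t a)
                      + (t - 1/2) * crossing_excess t).
  { pose proof (crossing_excess_pos t Ht).
    apply Rplus_le_le_0_compat; apply Rmult_le_pos; lra. }
  rewrite <- WW_sub_w1_decomp in Hrhs.
  assert (0 <= 24 * WW t a - 35 * w1 t a) by nra.
  lra.
Qed.

Lemma w2_le_WW (t a : R) :
  1/2 <= t <= 1 -> w2 t a <= w1 t a -> 35 * w2 t a <= 24 * WW t a.
Proof.
  intros Ht H21.
  assert (Hslope : 24*t^2 - 44*t - 44 <= 0) by nra.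
  assert (Hrhs : 0 <= (24*t^2 - 44*t - 44) * (w2 t a - w1 t a)
                      + (t - 1/2) * crossing_excess t).
  { pose proof (crossing_excess_pos t Ht).
    apply Rplus_le_le_0_compat; [nra | apply Rmult_le_pos; lra]. }
  rewrite <- WW_sub_w2_decomp in Hrhs.
  assert (0 <= 24 * WW t a - 35 * w2 t a) by nra.
  lra.
Qed.

Lemma w_le_WW (t a : R) : 1/2 <= t <= 1 -> 35 * w t a <= 24 * WW t a.
Proof.
  intros Ht.
  assert (Hw1 : w t a <= w1 t a) by apply Rmin_l.
  assert (Hw2 : w t a <= w2 t a).
  { unfold w; eapply Rle_trans; [apply Rmin_r | apply Rmin_l]. }
  destruct (Rle_dec (w1 t a) (w2 t a)) as [H12 | H21].
  - pose proof (w1_le_WW t a Ht H12); lra.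
  - pose proof (w2_le_WW t a Ht ltac:(lra)); lra.
Qed.

Lemma WW_pos (t a : R) : -2 < t -> (3*t+2)/4 <= a -> 0 < WW t a.
Proof.
  intros Ht Ha.
  assert (Hlin : (t+2)*a - (t^2/2 + t) = (t+2)*(a - (3*t+2)/4) + (t+2)^2/4)
    by field.
  unfold WW; rewrite Hlin.
  apply Rmult_lt_0_compat; [nra | lra].
Qed.

Lemma w1_lt_w3 (t a : R) : 1/2 <= t -> (3*t+2)/4 <= a -> w1 t a < w3 t a.
Proof.
  intros Ht Ha.
  assert (Hdiff : w3 t a - w1 t a
                  = (6*t-3)*(a - (3*t+2)/4) + (9*t^2 - 9*t + 10)/4)
    by (unfold w1, w3; field).
  nra.
Qed.

Theorem lemmaA7 (t : R) :
  1/2 <= t <= 1 ->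
  forall a : R, (3*t+2)/4 <= a <= 2 ->
    w1 t a < w3 t a /\ w t a / WW t a <= 24/35.
Proof.
  intros Ht a Ha.
  split; [apply w1_lt_w3; lra |].
  assert (HW : 0 < WW t a) by (apply WW_pos; lra).
  pose proof (w_le_WW t a Ht).
  apply (Rmult_le_reg_r (WW t a)); [exact HW |].
  unfold Rdiv; rewrite Rmult_assoc, Rinv_l by lra.
  lra.
Qed.
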